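(* Let $I\subset S=K[x_1,\dots,x_t]$ be an $\mathfrak m$-primary monomial ideal, where $\mathfrak m=\langle x_1,\dots,x_t\rangle$. Let $\mathcal M$ be the set of all $t\times t$ matrices $A=(a_{ij})$ whose rows are the exponent vectors of $t$ elements chosen from $\mathscr G(I)$ and which satisfy: (1) $a_{ii}>a_{li}$ for all $l\ne i$ and all $i=1,\dots,t$; (2) $(a_{11}-1,\dots,a_{tt}-1)\notin E(I)$. Then $$v(I)=\min\{\operatorname{tr}(A)-t : A\in\mathcal M\}.$$
   Context: $K$ is a field and $S$ is standard graded. For a proper graded ideal $I$, the $v$-number is $v(I)=\min\{k\ge 0 : \exists f\in S_k,\ \mathcal P\in\operatorname{Ass}(S/I) \text{ with } (I:f)=\mathcal P\}$. For a monomial ideal $I$, $\mathscr G(I)$ is its unique minimal set of monomial generators, and $E(I)\subseteq\mathbb Z_{\ge0}^t$ is the set of exponent vectors of the monomials lying in $I$ (the monomial $x_1^{a_1}\cdots x_t^{a_t}$ has exponent vector $(a_1,\dots,a_t)$). $\operatorname{tr}$ denotes the trace. *)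

From HB Require Import structures.
From mathcomp Require Import all_boot all_order all_algebra.
From mathcomp Require Import mpoly.
Set Implicit Arguments. Unset Strict Implicit. Unset Printing Implicit Defensive.
Import GRing.Theory.
Local Open Scope ring_scope.

Section Defs.
Variables (K : fieldType) (t : nat).
Local Notation S := {mpoly K[t]}.

Definition is_ideal (I : S -> Prop) : Prop :=
  [/\ I 0, (forall a b, I a -> I b -> I (a + b)) & (forall r a, I a -> I (r * a))].

Definition ideal_gen (A : S -> Prop) : S -> Prop := fun f =>
  exists s : seq (S * S), (forall p, p \in s -> A p.2) /\
                          f = \sum_(p <- s) p.1 * p.2.

Definition proper_ideal (I : S -> Prop) : Prop := is_ideal I /\ ~ I 1.

Definition prime_ideal (P : S -> Prop) : Prop :=
  proper_ideal P /\ (forall a b, P (a * b) -> P a \/ P b).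

Definition primary_ideal (Q : S -> Prop) : Prop :=
  proper_ideal Q /\ (forall a b, Q (a * b) -> ~ Q a -> exists n, Q (b ^+ n)).

Definition radical (I : S -> Prop) : S -> Prop := fun f => exists n, I (f ^+ n).

Definition max_irr : S -> Prop := ideal_gen (fun f => exists i : 'I_t, f = 'X_i).

Definition m_primary (I : S -> Prop) : Prop :=
  primary_ideal I /\ (forall f, radical I f <-> max_irr f).

Definition monomial_ideal (I : S -> Prop) : Prop :=
  is_ideal I /\ exists A : 'X_{1..t} -> Prop,
    forall f, I f <-> ideal_gen (fun g => exists m, A m /\ g = 'X_[m]) f.

Definition colon (I : S -> Prop) (f : S) : S -> Prop := fun g => I (g * f).

Definition Ass (I : S -> Prop) (P : S -> Prop) : Prop :=
  prime_ideal P /\ exists g : S, forall h, P h <-> colon I g h.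

Definition vnumber_witness (I : S -> Prop) (k : nat) : Prop :=
  exists (f : S) (P : S -> Prop),
    f \is k.-homog /\ Ass I P /\ (forall h, colon I f h <-> P h).

Definition is_vnumber (I : S -> Prop) (n : nat) : Prop :=
  vnumber_witness I n /\ (forall k, vnumber_witness I k -> (n <= k)%N).

Definition E (I : S -> Prop) (a : 'X_{1..t}) : Prop := I 'X_[a].

(* G(I): minimal monomial generators = monomials of I minimal for divisibility *)
Definition mingens (I : S -> Prop) (a : 'X_{1..t}) : Prop :=
  I 'X_[a] /\ (forall b : 'X_{1..t}, I 'X_[b] -> (b <= a)%MM -> b = a).

Definition matM (I : S -> Prop) (A : 'M[nat]_t) : Prop :=
  [/\ (forall i : 'I_t, exists a, mingens I a /\ forall j, A i j = a j),
      (forall i l : 'I_t, l != i -> (A l i < A i i)%N)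
    & ~ E I [multinom (A i i).-1 | i < t]].

Definition trace_nat (A : 'M[nat]_t) : nat := (\sum_(i < t) A i i)%N.

End Defs.

(* Call x^b a socle monomial of I if x^b is not in I but every x_i x^b is.
   Then (I : x^b) is m, the kernel of the constant term, so deg b is a
   witness degree for v(I).  Conversely, if (I : f) is an associated prime P,
   then P contains I, hence every x_i, and any monomial of f outside I is a
   socle monomial of the degree of f.  So v(I) is the least degree of a socle
   monomial.  The matrices of M are socle monomials in disguise: row i of A
   is a minimal generator dividing x^(b + e_i), whose i-th entry must be
   b_i + 1 because x^b is not in I; so diag A = b + (1, ..., 1) and
   tr(A) - t = deg b. *)
Set Warnings "-notation-overridden,-ambiguous-paths,-notation-incompatible-prefix".
From HB Require Import structures.
From mathcomp Require Import all_boot all_order all_algebra.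
From mathcomp Require Import mpoly.
From Stdlib Require Import Classical Wf_nat.
From mathcomp Require Import zify.
Set Implicit Arguments. Unset Strict Implicit. Unset Printing Implicit Defensive.
Import GRing.Theory.

Lemma ex_least_nat (P : nat -> Prop) :
  (exists n, P n) -> exists n, P n /\ forall m, P m -> (n <= m)%N.
Proof.
move=> exP; have [n [[Pn minn] _]] :=
  dec_inh_nat_subset_has_unique_least_element P (fun m => classic (P m)) exP.
by exists n; split=> // m /minn /leP.
Qed.

Lemma lepm_mdeg_eq t (a b : 'X_{1..t}) :
  (a <= b)%MM -> (mdeg b <= mdeg a)%N -> a = b.
Proof.
move=> le_ab; rewrite -(submK le_ab) mdegD -{2}(add0n (mdeg a)) leq_add2r.
by rewrite leqn0 mdeg_eq0 => /eqP ->; rewrite add0m.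
Qed.

Lemma sum_mnm_succ t (b : 'X_{1..t}) : (\sum_(i < t) (b i).+1)%N = (mdeg b + t)%N.
Proof.
rewrite (eq_bigr (fun i => b i + 1)%N) => [|i _]; last by rewrite addn1.
by rewrite big_split /= sum_nat_const card_ord muln1 mdegE.
Qed.

Local Open Scope ring_scope.

Definition socle_monomial (K : fieldType) t (I : {mpoly K[t]} -> Prop)
    (b : 'X_{1..t}) : Prop :=
  ~ I 'X_[b] /\ forall i : 'I_t, I 'X_[b + U_(i)].

Definition socle_degree (K : fieldType) t (I : {mpoly K[t]} -> Prop) (k : nat) :=
  exists b, socle_monomial I b /\ mdeg b = k.

Lemma mingens_exists (K : fieldType) t (I : {mpoly K[t]} -> Prop) c :
  I 'X_[c] -> exists a, mingens I a /\ (a <= c)%MM.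
Proof.
move=> Ic.
have [_ [[a [Ia le_ac <-]] mina]] :=
  ex_least_nat (ex_intro (fun n => exists a, [/\ I 'X_[a], a <= c & mdeg a = n]%MM)
                         _ (ex_intro _ c (And3 Ic (lepm_refl c) erefl))).
exists a; split=> //; split=> // b Ib le_ba.
apply: lepm_mdeg_eq => //; apply: mina.
by exists b; split=> //; apply: lepm_trans le_ba le_ac.
Qed.

Section IdealMonomials.
Variables (K : fieldType) (t : nat) (I : {mpoly K[t]} -> Prop).
Hypothesis I_ideal : is_ideal I.

Lemma ideal0 : I 0. Proof. by case: I_ideal. Qed.
Lemma idealD a b : I a -> I b -> I (a + b). Proof. by case: I_ideal => _ D _; apply: D. Qed.
Lemma idealM r a : I a -> I (r * a). Proof. by case: I_ideal => _ _ M; apply: M. Qed.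

Lemma ideal_sum (T : eqType) (s : seq T) (F : T -> {mpoly K[t]}) :
  (forall x, x \in s -> I (F x)) -> I (\sum_(x <- s) F x).
Proof.
elim: s => [|x s IHs] IF; first by rewrite big_nil; exact: ideal0.
rewrite big_cons; apply: idealD; first by apply/IF/mem_head.
by apply: IHs => y sy; apply: IF; rewrite inE sy orbT.
Qed.

Lemma ideal_msupp f : (forall m, m \in msupp f -> I 'X_[m]) -> I f.
Proof.
move=> If; rewrite [f]mpolyE; apply: ideal_sum => m fm.
by rewrite -mul_mpolyC; apply/idealM/If.
Qed.

Lemma ideal_lepm a b : (a <= b)%MM -> I 'X_[a] -> I 'X_[b].
Proof. by move=> le_ab Ia; rewrite -(submK le_ab) mpolyXD; apply: idealM. Qed.

Lemma socle_matM b :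
  socle_monomial I b -> exists A, matM I A /\ trace_nat A = (mdeg b + t)%N.
Proof.
case=> Ib Ibi.
have [a mina] := fin_all_exists (fun i => mingens_exists (Ibi i)).
have a_diag i : a i i = (b i).+1.
  have [[Iai _] le_ai] := mina i.
  move/mnm_lepP: (le_ai) => /(_ i); rewrite mnmDE mnm1E eqxx addn1 leq_eqVlt.
  case/orP=> [/eqP //|]; rewrite ltnS => lt_ai; exfalso; apply/Ib/(ideal_lepm _ Iai).
  apply/mnm_lepP => j; have [<- //|ij] := eqVneq i j.
  by move/mnm_lepP: le_ai => /(_ j); rewrite mnmDE mnm1E (negbTE ij) addn0.
exists (\matrix_(i, j) a i j); split; first split.
- by move=> i; exists (a i); split=> [|j]; [case: (mina i)|rewrite mxE].
- move=> i l li; rewrite !mxE a_diag ltnS.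
  by move/mnm_lepP: (proj2 (mina l)) => /(_ i); rewrite mnmDE mnm1E (negbTE li) addn0.
- suff -> : [multinom ((\matrix_(i, j) a i j : 'M[nat]_t) i i).-1 | i < t] = b by [].
  by apply/mnmP => i; rewrite mnmE mxE a_diag.
- by rewrite -sum_mnm_succ; apply: eq_bigr => i _; rewrite mxE a_diag.
Qed.

Lemma matM_socle A :
  matM I A -> socle_monomial I [multinom (A i i).-1 | i < t] /\
              trace_nat A = (mdeg [multinom (A i i).-1 | i < t] + t)%N.
Proof.
case=> rowA diagA notIb; set b := [multinom _ | i < _] in notIb *.
have row_le i a : (forall j, A i j = a j) -> forall j, j != i -> (a j <= b j)%N.
  by move=> Aa j ji; rewrite mnmE -Aa; have := diagA j i; rewrite eq_sym ji; lia.
have A_pos i : (0 < A i i)%N.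
  rewrite lt0n; apply/negP => /eqP A0; have [a [[Ia _] Aa]] := rowA i.
  apply/notIb/(ideal_lepm _ Ia)/mnm_lepP => j; have [->|ji] := eqVneq j i.
    by rewrite -Aa A0.
  exact: row_le Aa j ji.
split; first split=> // i.
  have [a [[Ia _] Aa]] := rowA i; apply/(ideal_lepm _ Ia)/mnm_lepP => j.
  rewrite mnmDE mnm1E; have [->|ji] := eqVneq j i; last by rewrite addn0 (row_le i).
  by rewrite addn1 mnmE -Aa prednK.
by rewrite -sum_mnm_succ; apply: eq_bigr => i _; rewrite mnmE prednK.
Qed.

Lemma socle_degree_matM k :
  socle_degree I k <-> exists A, matM I A /\ (trace_nat A - t)%N = k.
Proof.
split=> [[b [bI <-]]|[A [MA <-]]].
  by have [A [MA trA]] := socle_matM bI; exists A; rewrite trA addnK.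
by have [bI ->] := matM_socle MA; exists [multinom (A i i).-1 | i < t]; rewrite addnK.
Qed.

End IdealMonomials.

Section MonomialIdeal.
Variables (K : fieldType) (t : nat) (I : {mpoly K[t]} -> Prop).
Hypothesis I_monomial : monomial_ideal I.

Let I_ideal : is_ideal I. Proof. by case: I_monomial. Qed.

Lemma monomial_ideal_msupp f : I f -> forall m, m \in msupp f -> I 'X_[m].
Proof.
case: I_monomial => _ [G IG] /IG [s [sG ->]] {f} m.
elim: s sG => [|[r g] s IHs] sG; first by rewrite big_nil msupp0.
rewrite big_cons => /msuppD_le; rewrite mem_cat => /orP [|]; last first.
  by apply: IHs => p sp; apply: sG; rewrite inE sp orbT.
have [n [Gn ->]] : exists n, G n /\ g = 'X_[n] by apply: (sG (r, g)); rewrite mem_head.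
have In : I 'X_[n].
  apply/IG; exists [:: (1, 'X_[n])]; split; last by rewrite big_seq1 mul1r.
  by move=> p; rewrite inE => /eqP ->; exists n.
rewrite /= (perm_mem (msuppMX _ _)) => /mapP [m' _ ->].
by rewrite mpolyXD mulrC; apply: idealM.
Qed.

Lemma colon_socle_mcoeff0 b h :
  socle_monomial I b -> colon I 'X_[b] h <-> h@_0%MM = 0.
Proof.
case=> Ib Ibi; split=> [Ihb|h0].
  apply: NNPP => h0; apply/Ib; rewrite -[b]addm0.
  by apply: (monomial_ideal_msupp Ihb); rewrite mcoeff_msupp mcoeffMX; apply/eqP.
apply: (ideal_msupp I_ideal) => bm.
rewrite (perm_mem (msuppMX _ _)) => /mapP [m hm {bm}->].
have [i mi] : exists i, m i != 0%N.
  apply: NNPP => m0; move: hm; rewrite mcoeff_msupp.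
  suff -> : m = 0%MM by rewrite h0 eqxx.
  by apply/mnmP => i; rewrite mnm0E; apply: NNPP => mi; apply: m0; exists i; apply/eqP.
apply: (ideal_lepm I_ideal _ (Ibi i)); apply/mnm_lepP => j.
by rewrite !mnmDE leq_add2l mnm1E; case: eqP => [<-|_] //; rewrite lt0n.
Qed.

Lemma colon_socle_prime b :
  socle_monomial I b -> prime_ideal (colon I 'X_[b]).
Proof.
move=> bI; have colonE := colon_socle_mcoeff0 _ bI.
split; first split; first split.
- by apply/colonE; rewrite mcoeff0.
- by move=> f g /colonE f0 /colonE g0; apply/colonE; rewrite mcoeffD f0 g0 addr0.
- by move=> r f /colonE f0; apply/colonE; rewrite (rmorphM (mcoeff 0%MM)) /= f0 mulr0.
- by rewrite /colon mul1r; case: bI.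
- move=> f g /colonE; rewrite (rmorphM (mcoeff 0%MM)) /= => /eqP.
  by rewrite mulf_eq0 => /orP [] /eqP fg0; [left|right]; apply/colonE.
Qed.

Hypothesis I_m_primary : m_primary I.

Lemma m_primary_Xn (i : 'I_t) : exists n, I 'X_[U_(i) *+ n].
Proof.
case: I_m_primary => _ /(_ 'X_i) [_ radI].
have [n In] : radical I 'X_i.
  apply: radI; exists [:: (1, 'X_i)]; split; last by rewrite big_seq1 mul1r.
  by move=> p; rewrite inE => /eqP ->; exists i.
by exists n; rewrite -mpolyXn.
Qed.

Lemma m_primary_mdeg_bound : exists B, forall c, ~ I 'X_[c] -> (mdeg c <= B)%N.
Proof.
have [N IN] := fin_all_exists m_primary_Xn.
exists (\sum_i N i)%N => c Ic; rewrite mdegE leq_sum // => i _.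
rewrite leqNgt; apply/negP => lt_Nc; apply/Ic/(ideal_lepm I_ideal _ (IN i)).
apply/mnm_lepP => j; rewrite mulmnE mnm1E.
by case: eqP => [<-|_]; [rewrite mul1n ltnW | rewrite mul0n].
Qed.

Lemma socle_monomial_exists : exists k, socle_degree I k.
Proof.
have [B IB] := m_primary_mdeg_bound.
have I1 : ~ I 'X_[0%MM] by rewrite mpolyX0; case: I_m_primary => [[[_ I1] _] _].
(* a non-member of maximal degree is a socle monomial *)
have [_ [[b [Ib <-]] minb]] :=
  ex_least_nat (ex_intro (fun n => exists b, ~ I 'X_[b] /\ (B - mdeg b)%N = n)
                         _ (ex_intro _ 0%MM (conj I1 erefl))).
exists (mdeg b), b; split=> //; split=> // i; apply: NNPP => Ibi.
have := minb _ (ex_intro _ _ (conj Ibi erefl)).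
have := IB _ Ibi; rewrite mdegD mdeg1; lia.
Qed.

Lemma vnumber_witness_socle k : vnumber_witness I k <-> socle_degree I k.
Proof.
split=> [[f [P [homf [[Pprime _] fP]]]]|[b [bI <-]]]; last first.
  exists 'X_[b], (colon I 'X_[b]); split; first by rewrite dhomogX.
  by split=> //; split; [apply: colon_socle_prime | exists 'X_[b]].
have [[_ P1] Pmul] := Pprime.
have IP h : I h -> P h by move=> Ih; apply/fP; rewrite /colon mulrC; apply: idealM.
have PX i : P 'X_i.
  have [n /IP] := m_primary_Xn i; rewrite -mpolyXn.
  elim: n => [|n IHn]; first by rewrite expr0 => /P1.
  by rewrite exprS => /Pmul [].
have [u [fu Iu]] : exists u, u \in msupp f /\ ~ I 'X_[u].
  apply: NNPP => allI; apply/P1/fP; rewrite /colon mul1r.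
  apply: (ideal_msupp I_ideal) => m fm; apply: NNPP => Im; apply: allI; exists m.
  by split.
exists u; split; last by move/dhomogP: homf; apply.
split=> // i; rewrite addmC; apply: (monomial_ideal_msupp (proj2 (fP _) (PX i))).
by rewrite mcoeff_msupp mulrC mcoeffMX -mcoeff_msupp.
Qed.

End MonomialIdeal.

Theorem theorem4p1 (K : fieldType) (t : nat) (I : {mpoly K[t]} -> Prop) :
  monomial_ideal I -> m_primary I ->
  exists n : nat,
    is_vnumber I n /\
    (exists A, matM I A /\ (trace_nat A - t)%N = n) /\
    (forall A, matM I A -> (n <= trace_nat A - t)%N).
Proof.
move=> I_monomial I_m_primary; have [I_ideal _] := I_monomial.
have vnumberE := vnumber_witness_socle I_monomial I_m_primary.
have [n [socle_n min_n]] := ex_least_nat (socle_monomial_exists I_monomial I_m_primary).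
exists n; split; [split|split].
- exact/vnumberE.
- by move=> k /vnumberE /min_n.
- exact/(socle_degree_matM I_ideal).
- by move=> A MA; apply/min_n/(socle_degree_matM I_ideal); exists A.
Qed.
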